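(* Let $n\ge2$, $\kappa\ge1$ and $G\in\mathcal G_{[n;\kappa]}$ with payoff structure vectors $V_1^c,\dots,V_n^c\in\mathbb R^{\kappa^n}$. Consider the conditions (A) $V_i^c=-V_1^c\ltimes W_{[\kappa^{i-2},\kappa]}\ltimes W_{[\kappa,\kappa^{i-1}]}$ for $i=2,\dots,n$; (B) $V_1^c\ltimes\delta_\kappa^s\ltimes\left[I_{\kappa^{n-1}}+\left(W_{[\kappa^{i-2},\kappa]}\ltimes W_{[\kappa,\kappa^{i-3}]}\right)\otimes I_{\kappa^{n-i}}\right]=0$ for all $s=1,\dots,\kappa$ and $i=3,\dots,n$. (1) If $n=2$, then $G$ is skew-symmetric if and only if (A) holds (i.e. $V_2^c=-V_1^c W_{[\kappa,\kappa]}$). (2) If $n>2$, then $G$ is skew-symmetric if and only if (A) and (B) both hold.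
   Context: Semi-tensor product: for $A\in\mathbb R^{m\times n}$, $B\in\mathbb R^{p\times q}$ and $t=\mathrm{lcm}(n,p)$, $A\ltimes B=(A\otimes I_{t/n})(B\otimes I_{t/p})$; it is associative and coincides with the Kronecker product on column vectors. Swap matrix: $W_{[m,n]}\in\mathbb R^{mn\times mn}$ is the permutation matrix with $W_{[m,n]}(X\otimes Y)=Y\otimes X$ for all $X\in\mathbb R^m$, $Y\in\mathbb R^n$ (so $W_{[1,n]}=W_{[n,1]}=I_n$). $\delta_\kappa^s$ is the $s$-th column of $I_\kappa$. A finite game $G\in\mathcal G_{[n;\kappa]}$ has players $\{1,\dots,n\}$, each with strategy set $\{1,\dots,\kappa\}$, strategy $j$ identified with $\delta_\kappa^j$, and payoffs $c_i$; $V_i^c\in\mathbb R^{\kappa^n}$ is the unique row vector with $c_i(x_1,\dots,x_n)=V_i^c\ltimes x_1\ltimes\cdots\ltimes x_n$ for all $x_j\in\{\delta_\kappa^1,\dots,\delta_\kappa^\kappa\}$. $G$ is skew-symmetric if for every permutation $\sigma\in\mathbf S_n$, every $i$ and every profile, $c_i(x_1,\dots,x_n)=\mathrm{sgn}(\sigma)\,c_{\sigma(i)}(x_{\sigma^{-1}(1)},\dots,x_{\sigma^{-1}(n)})$. *)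

From HB Require Import structures.
From mathcomp Require Import all_boot all_order all_algebra all_fingroup.
From mathcomp Require Import mxtens.
Set Implicit Arguments. Unset Strict Implicit. Unset Printing Implicit Defensive.
Import GRing.Theory Num.Theory.
Local Open Scope ring_scope.

Section STP.
Variable R : comNzRingType.

(* A matrix packed together with its dimensions, so that products of
   matrices with arbitrary (computed) dimensions can be formed and compared. *)
Record dmat := DM { drows : nat; dcols : nat; dmx : 'M[R]_(drows, dcols) }.

Definition dkron (A B : dmat) : dmat := DM (dmx A *t dmx B).

Definition did (k : nat) : dmat := DM (1%:M : 'M[R]_k).

(* Ordinary matrix product, when the inner dimensions agree. (Only used
   below when they provably agree; otherwise returns the first argument.) *)
Definition dmul (A B : dmat) : dmat :=
  match eqVneq (dcols A) (drows B) with
  | EqNotNeq e => DM (dmx A *m castmx (esym e, erefl) (dmx B))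
  | NeqNotEq _ => A
  end.

(* Sum of two matrices of the same size (same convention on mismatch). *)
Definition dadd (A B : dmat) : dmat :=
  match eqVneq (drows A) (drows B), eqVneq (dcols A) (dcols B) with
  | EqNotNeq e1, EqNotNeq e2 => DM (dmx A + castmx (esym e1, esym e2) (dmx B))
  | _, _ => A
  end.

Definition dopp (A : dmat) : dmat := DM (- dmx A).

(* Semi-tensor product: A |x B = (A \otimes I_{t/n}) (B \otimes I_{t/p}),
   t = lcm(n, p), A : m x n, B : p x q.  Here n*(t/n) = t = p*(t/p), so
   the ordinary product is well defined. *)
Definition stp (A B : dmat) : dmat :=
  let t := lcmn (dcols A) (drows B) in
  dmul (dkron A (did (t %/ dcols A))) (dkron B (did (t %/ drows B))).

(* Swap matrix W_[m,n] (mn x mn): W (X \otimes Y) = Y \otimes X.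
   Entry (i, j) is 1 iff, writing j = a*n + b (a < m, b < n), i = b*m + a. *)
Definition swapmx (m n : nat) : 'M[R]_(m * n) :=
  \matrix_(i, j) ((i : nat) == (j %% n) * m + j %/ n)%N%:R.
Definition dswap (m n : nat) : dmat := DM (swapmx m n).

(* delta_k^s : the s-th column of I_k (s : 'I_k is 0-based). *)
Definition ddelta (k : nat) (s : 'I_k) : dmat := DM (delta_mx s (0 : 'I_1) : 'cV[R]_k).

Definition dscal (a : R) : dmat := DM (a%:M : 'M[R]_1).

Definition dzero (A : dmat) : Prop := dmx A = 0.

End STP.

(* A finite game in G_[n; kappa]: players 'I_n (player i+1 of the paper is
   index i), strategies 'I_kappa (strategy j+1 of the paper is index j,
   identified with delta_kappa^{j+1}), payoffs c i : profile -> R. *)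
Definition profile (n kappa : nat) := 'I_n -> 'I_kappa.

Definition is_structure_vector (R : comNzRingType) (n kappa : nat)
  (ci : profile n kappa -> R) (V : 'rV[R]_(kappa ^ n)) : Prop :=
  forall x : profile n kappa,
    foldl (@stp R) (DM V) [seq ddelta R (x j) | j <- enum 'I_n] = dscal (ci x).

Definition skew_symmetric (R : comNzRingType) (n kappa : nat)
  (c : 'I_n -> profile n kappa -> R) : Prop :=
  forall (sigma : 'S_n) (i : 'I_n) (x : profile n kappa),
    c i x = (-1) ^+ odd_perm sigma * c (sigma i) (fun j => x (sigma^-1 j)%g).

(* Identify the columns of [I_(k^m)] with the base-[k] digit strings of their
   indices.  Then [delta_k^(x_1) |x ... |x delta_k^(x_n)] is the column indexed by the
   profile [x] itself, so [V_i^c] just lists the payoffs [c_i(x)].  A swap matrix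
   [W_[k^a,k^b]] rotates digit strings by [a]; semi-tensor products of such matrices,
   padded by identities, rearrange the digits of a prefix, and multiplying a row
   vector by them permutes its entries in the same way.  Unfolded like this, (A) for
   player [i] reads [c_i(x) = -c_1(x o (1 i))] and (B) for [i] reads
   [c_1(x) = -c_1(x o (2 i))].  Skew-symmetry need only be checked on transpositions,
   and conjugation reduces those to the [(1 i)].  Under [(1 i)] the payoffs of players
   [1] and [i] are governed by (A), and that of a third player [j], through (A) for
   [j], by the antisymmetry of [c_1] under [(i j)], which conjugation by
   transpositions through player [2] reduces to (B). *)

From HB Require Import structures.
From mathcomp Require Import all_boot all_order all_algebra all_fingroup.
From mathcomp Require Import mxtens zify.
From Stdlib Require Import FunctionalExtensionality.
Import GRing.Theory Num.Theory.
Local Open Scope ring_scope.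
Set Implicit Arguments. Unset Strict Implicit. Unset Printing Implicit Defensive.

Section Entries.
Variable R : comNzRingType.
Implicit Types A B C : dmat R.

(* Entries indexed by natural numbers, with the junk value 0 out of bounds. *)
Definition dent A (i j : nat) : R :=
  \sum_(a < drows A) \sum_(b < dcols A) ((a == i :> nat) && (b == j :> nat))%:R * dmx A a b.

Lemma dent_ord r c (M : 'M[R]_(r, c)) (a : 'I_r) (b : 'I_c) : dent (DM M) a b = M a b.
Proof.
rewrite /dent /= (bigD1 a) //= (bigD1 b) //= !eqxx mul1r.
rewrite big1 ?addr0 => [|b' nb]; last by rewrite (inj_eq val_inj) (negbTE nb) andbF mul0r.
rewrite big1 ?addr0 // => a' na; rewrite big1 // => b' _.
by rewrite (inj_eq val_inj) (negbTE na) mul0r.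
Qed.

Lemma dent_out r c (M : 'M[R]_(r, c)) i j :
  ~~ ((i < r) && (j < c))%N -> dent (DM M) i j = 0.
Proof.
move=> out; rewrite /dent /= big1 // => a _; rewrite big1 // => b _.
by case: eqP => [ai|]; case: eqP => [bj|] //=; rewrite ?mul0r //; rewrite -ai -bj !ltn_ord in out.
Qed.

Lemma dent_in r c (M : 'M[R]_(r, c)) i j (hi : (i < r)%N) (hj : (j < c)%N) :
  dent (DM M) i j = M (Ordinal hi) (Ordinal hj).
Proof. by rewrite -dent_ord. Qed.

Lemma dmatP A B : drows A = drows B -> dcols A = dcols B ->
  (forall i j, (i < drows A)%N -> (j < dcols A)%N -> dent A i j = dent B i j) -> A = B.
Proof.
case: A => r c M; case: B => r' c' M' /= er ec eAB; subst.
by congr DM; apply/matrixP => i j; rewrite -!dent_ord eAB.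
Qed.

Lemma dzeroP A :
  dzero A <-> (forall i j, (i < drows A)%N -> (j < dcols A)%N -> dent A i j = 0).
Proof.
case: A => r c M; rewrite /dzero /=; split => [-> i j hi hj|M0].
  by rewrite dent_in mxE.
by apply/matrixP => i j; rewrite mxE -dent_ord M0.
Qed.

Lemma dkronE A B i j :
  dent (dkron A B) i j = dent A (i %/ drows B) (j %/ dcols B)
                         * dent B (i %% drows B) (j %% dcols B).
Proof.
case: A => ra ca A; case: B => rb cb B; rewrite /dkron /=.
have [/andP[hi hj]|out] := boolP ((i < ra * rb) && (j < ca * cb))%N.
  by rewrite (dent_in _ hi hj) mxE -!dent_ord.
rewrite dent_out //; case: (posnP rb) => [rb0|rb_gt0].
  by rewrite [dent (DM B) _ _]dent_out ?mulr0 // rb0.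
case: (posnP cb) => [cb0|cb_gt0].
  by rewrite [dent (DM B) _ _]dent_out ?mulr0 // cb0 andbF.
by rewrite [dent (DM A) _ _]dent_out ?mul0r // !ltn_divLR.
Qed.

Lemma dmul_rows A B : drows (dmul A B) = drows A.
Proof. by rewrite /dmul; case: eqVneq. Qed.

Lemma dmul_cols A B : dcols A = drows B -> dcols (dmul A B) = dcols B.
Proof. by rewrite /dmul => e; case: eqVneq => //; rewrite e eqxx. Qed.

Lemma dmulE A B i j : dcols A = drows B ->
  dent (dmul A B) i j = \sum_(r < dcols A) dent A i r * dent B r j.
Proof.
case: A => ra ca A; case: B => rb cb B /= e; subst.
rewrite /dmul /=; case: eqVneq => [e|]; last by rewrite eqxx.
rewrite (eq_irrelevance e erefl) castmx_id.
have [/andP[hi hj]|out] := boolP ((i < ra) && (j < cb))%N.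
  by rewrite (dent_in _ hi hj) mxE; apply: eq_bigr => r _; rewrite -!dent_ord.
rewrite dent_out // big1 // => r _; rewrite negb_and in out.
case/orP: out => out; first by rewrite dent_out ?mul0r // negb_and out.
by rewrite [dent (DM B) _ _]dent_out ?mulr0 // negb_and out orbT.
Qed.

Lemma dadd_rows A B : drows (dadd A B) = drows A.
Proof.
by rewrite /dadd; case: (eqVneq (drows A) (drows B)) => ?; case: (eqVneq (dcols A) (dcols B)).
Qed.

Lemma dadd_cols A B : dcols (dadd A B) = dcols A.
Proof.
by rewrite /dadd; case: (eqVneq (drows A) (drows B)) => ?; case: (eqVneq (dcols A) (dcols B)).
Qed.

Lemma daddE A B i j : drows A = drows B -> dcols A = dcols B ->
  dent (dadd A B) i j = dent A i j + dent B i j.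
Proof.
case: A => ra ca A; case: B => rb cb B /= e1 e2; subst.
rewrite /dadd /=; case: eqVneq => [e|]; last by rewrite eqxx.
case: eqVneq => [e'|]; last by rewrite eqxx.
rewrite (eq_irrelevance e erefl) (eq_irrelevance e' erefl) castmx_id.
have [/andP[hi hj]|out] := boolP ((i < rb) && (j < cb))%N.
  by rewrite !(dent_in _ hi hj) mxE.
by rewrite !dent_out // addr0.
Qed.

Lemma doppE A i j : dent (dopp A) i j = - dent A i j.
Proof.
case: A => r c A; rewrite /dopp /=.
have [/andP[hi hj]|out] := boolP ((i < r) && (j < c))%N.
  by rewrite !(dent_in _ hi hj) mxE.
by rewrite !dent_out // oppr0.
Qed.

Lemma didE m i j : dent (did R m) i j = ((i == j) && (i < m)%N)%:R.
Proof.
have [/andP[hi hj]|out] := boolP ((i < m) && (j < m))%N.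
  by rewrite (dent_in _ hi hj) mxE /= hi andbT.
rewrite dent_out //; case: eqP out => // ->.
by rewrite andbb => /negbTE ->.
Qed.

Lemma ddeltaE m (s : 'I_m) i j : dent (ddelta R s) i j = ((i == s) && (j == 0%N))%:R.
Proof.
have [/andP[hi hj]|out] := boolP ((i < m) && (j < 1))%N.
  by rewrite (dent_in _ hi hj) mxE.
rewrite dent_out //; case: eqP out => // ->; rewrite ltn_ord /=.
by case: eqP => // ->.
Qed.

Lemma dscalE (a : R) : dent (dscal a) 0 0 = a.
Proof. by rewrite (@dent_in 1 1 _ 0 0 isT isT) mxE mulr1n. Qed.

Lemma dkron_did1 A : dkron A (did R 1) = A.
Proof.
apply: dmatP => /= [||i j _ _]; rewrite ?muln1 //.
by rewrite dkronE /= !divn1 !modn1 didE mulr1.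
Qed.

Lemma dmul_daddr A B C i j :
  dcols A = drows B -> drows B = drows C -> dcols B = dcols C ->
  dent (dmul A (dadd B C)) i j = dent (dmul A B) i j + dent (dmul A C) i j.
Proof.
move=> eAB eBC eBC'; rewrite !dmulE ?dadd_rows -?eBC // -big_split /=.
by apply: eq_bigr => r _; rewrite daddE // mulrDr.
Qed.

Lemma stp_dvd A B : (drows B %| dcols A)%N -> (0 < dcols A)%N ->
  stp A B = dmul A (dkron B (did R (dcols A %/ drows B))).
Proof. by move=> dv pos; rewrite /stp (lcmn_idPl dv) divnn pos dkron_did1. Qed.

Lemma sum_pick N (F : nat -> R) m : (m < N)%N ->
  \sum_(r < N) F r * (r == m :> nat)%:R = F m.
Proof.
move=> mN; rewrite (bigD1 (Ordinal mN)) //= eqxx mulr1 big1 ?addr0 // => r nr.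
by rewrite -(inj_eq val_inj) in nr; rewrite (negbTE nr) mulr0.
Qed.

End Entries.

Lemma divmod_eqE (i a b q : nat) : (b < q)%N ->
  (i == a * q + b)%N = (i %/ q == a)%N && (i %% q == b)%N.
Proof.
move=> bq; have q_gt0 : (0 < q)%N by apply: leq_ltn_trans bq.
apply/eqP/andP => [->|[/eqP <- /eqP <-]]; last by rewrite -divn_eq.
by rewrite divnMDl // divn_small // addn0 modnMDl modn_small.
Qed.

Section Digits.
Variable k : nat.
Hypothesis k_gt0 : (0 < k)%N.

(* Big-endian base-[k] numeral: [delta_k^(d_1+1) |x ... |x delta_k^(d_m+1)] is
   the column of [I_(k^m)] of index [idx [:: d_1; ...; d_m]]. *)
Definition idx (l : seq nat) : nat := foldl (fun a d => a * k + d)%N 0%N l.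

Definition digits (N : nat) (l : seq nat) := (size l == N) && all (fun d => d < k)%N l.

Lemma idx_cat l1 l2 : idx (l1 ++ l2) = (idx l1 * k ^ size l2 + idx l2)%N.
Proof.
rewrite /idx foldl_cat; move: (foldl _ _ l1) => a.
elim: l2 a => [|d l2 IHl] a /=; first by rewrite muln1 addn0.
by rewrite IHl [in RHS]IHl add0n mulnDl expnS addnA mulnA.
Qed.

Lemma idx_cons d l : idx (d :: l) = (d * k ^ size l + idx l)%N.
Proof. by rewrite -cat1s idx_cat. Qed.

Lemma digits_cat M N l1 l2 :
  digits M l1 -> digits N l2 -> digits (M + N) (l1 ++ l2).
Proof.
by case/andP => /eqP <- d1 /andP[/eqP <- d2]; rewrite /digits size_cat eqxx all_cat d1.
Qed.

Lemma digits_take_drop a N l : (a <= N)%N -> digits N l ->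
  digits a (take a l) /\ digits (N - a)%N (drop a l).
Proof.
move=> aN /andP[/eqP sl dl]; rewrite /digits size_takel ?sl // size_drop sl !eqxx.
by rewrite -{1}(cat_take_drop a l) all_cat in dl; case/andP: dl => -> ->.
Qed.

Lemma idx_lt N l : digits N l -> (idx l < k ^ N)%N.
Proof.
case/andP => /eqP <-; elim: l => [|d l IHl] //= /andP[dk dl].
rewrite idx_cons expnS; exact: (mxtens_index_proof (Ordinal dk, Ordinal (IHl dl))).
Qed.

Lemma idx_divE a t l : digits (a + t) l -> (idx l %/ k ^ t)%N = idx (take a l).
Proof.
move=> dl; have [_ dd] := digits_take_drop (leq_addr t a) dl; rewrite addKn in dd.
rewrite -{1}(cat_take_drop a l) idx_cat (eqP (proj1 (andP dd))).
by rewrite divnMDl ?expn_gt0 ?k_gt0 // divn_small ?addn0 // idx_lt.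
Qed.

Lemma idx_modE a t l : digits (a + t) l -> (idx l %% k ^ t)%N = idx (drop a l).
Proof.
move=> dl; have [_ dd] := digits_take_drop (leq_addr t a) dl; rewrite addKn in dd.
rewrite -{1}(cat_take_drop a l) idx_cat (eqP (proj1 (andP dd))).
by rewrite modnMDl modn_small // idx_lt.
Qed.

Lemma idx_surj N j : (j < k ^ N)%N -> exists2 l, digits N l & idx l = j.
Proof.
elim: N j => [|N IHN] j jN.
  by move: jN; rewrite expn0 ltnS leqn0 => /eqP ->; exists [::].
have [|l /andP[/eqP sl dl] lj] := IHN (j %/ k)%N; first by rewrite ltn_divLR // -expnSr.
exists (rcons l (j %% k)%N); first by rewrite /digits size_rcons sl eqxx all_rcons ltn_mod k_gt0.
by rewrite -cats1 idx_cat lj /= expn1 /idx /= -divn_eq.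
Qed.

End Digits.

Section DigitMaps.
Variable R : comNzRingType.
Variable k : nat.
Hypothesis k_gt0 : (0 < k)%N.

Local Notation idx := (idx k).
Local Notation digits := (digits k).

Definition digit_map_mx M N (f : seq nat -> seq nat) (B : dmat R) : Prop :=
  [/\ drows B = (k ^ M)%N, dcols B = (k ^ N)%N,
      forall l, digits N l -> digits M (f l) &
      forall i l, (i < k ^ M)%N -> digits N l -> dent B i (idx l) = (i == idx (f l))%:R].

Definition on_prefix a (f : seq nat -> seq nat) (l : seq nat) := f (take a l) ++ drop a l.

Lemma digit_map_did N : digit_map_mx N N id (did R (k ^ N)).
Proof. by split=> // i l iN dl; rewrite didE iN andbT. Qed.

Lemma digit_map_ddelta (s : 'I_k) : digit_map_mx 1 0 (fun=> [:: val s]) (ddelta R s).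
Proof.
split=> [||l _|i l _ /andP[/eqP/size0nil -> _]]; rewrite ?expn1 //.
  by rewrite /digits /= ltn_ord.
by rewrite ddeltaE /= andbT /idx /= add0n.
Qed.

Lemma digit_map_dswap a b : digit_map_mx (a + b) (a + b) (rot a) (dswap R (k ^ a) (k ^ b)).
Proof.
split=> /= [||l|i l ilt dl]; rewrite ?expnD //.
  by case/andP => sl dl; rewrite /digits size_rot sl /= /rot all_cat andbC -all_cat cat_take_drop.
have jlt := idx_lt dl; rewrite expnD in ilt jlt.
rewrite (dent_in _ ilt jlt) mxE /= (idx_modE dl) (idx_divE k_gt0 dl).
have [/andP[/eqP st _] _] := digits_take_drop (leq_addr b a) dl.
by rewrite /rot idx_cat st.
Qed.

Lemma digits_on_prefix M N t f B : digit_map_mx M N f B ->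
  forall l, digits (N + t) l -> digits (M + t) (on_prefix N f l).
Proof.
case=> _ _ df _ l dl; have [dt dd] := digits_take_drop (leq_addr t N) dl.
by rewrite addKn in dd; apply: digits_cat (df _ dt) dd.
Qed.

Lemma digit_map_dkron M N t f B : digit_map_mx M N f B ->
  digit_map_mx (M + t) (N + t) (on_prefix N f) (dkron B (did R (k ^ t))).
Proof.
move=> mB; have [rB cB df eB] := mB.
split=> [||l|i l ilt dl]; rewrite /= ?rB ?cB ?expnD //; first exact: (digits_on_prefix (t := t) mB).
have [dt dd] := digits_take_drop (leq_addr t N) dl; rewrite addKn in dd.
rewrite dkronE /= (idx_divE k_gt0 dl) (idx_modE dl) eB ?ltn_divLR ?expn_gt0 ?k_gt0 -?expnD // didE.
rewrite ltn_mod expn_gt0 k_gt0 andbT -natrM mulnb.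
have [/eqP st _] := andP dd.
by rewrite /on_prefix idx_cat st divmod_eqE ?idx_lt.
Qed.

Lemma digit_map_dmul M N P f g B C :
  digit_map_mx M N f B -> digit_map_mx N P g C -> digit_map_mx M P (f \o g) (dmul B C).
Proof.
case=> rB cB df eB [rC cC dg eC]; split=> [||l dl|i l ilt dl].
- by rewrite dmul_rows.
- by rewrite dmul_cols // cB rC.
- exact/df/dg.
rewrite dmulE ?cB ?rC //.
under eq_bigr => r _ do rewrite (eC _ _ (ltn_ord r) dl).
by rewrite sum_pick ?idx_lt ?eB //; apply: dg.
Qed.

Lemma digit_map_stp N a f g B C : (a <= N)%N ->
  digit_map_mx N N f B -> digit_map_mx a a g C ->
  digit_map_mx N N (f \o on_prefix a g) (stp B C).
Proof.
move=> aN mB mC; have [rB cB _ _] := mB; have [rC _ _ _] := mC.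
rewrite stp_dvd ?cB ?rC ?dvdn_exp2l ?expn_gt0 ?k_gt0 // -expnB //.
by apply: digit_map_dmul mB _; rewrite -{1 2}(subnKC aN); apply: digit_map_dkron.
Qed.

Definition is_row N (A : dmat R) := drows A = 1%N /\ dcols A = (k ^ N)%N.

Definition row_coef (A : dmat R) l := dent A 0 (idx l).

Lemma row_coef_ext N A B : is_row N A -> is_row N B ->
  (forall l, digits N l -> row_coef A l = row_coef B l) -> A = B.
Proof.
move=> [rA cA] [rB cB] eAB; apply: dmatP => [||i j]; rewrite ?rA ?cA ?rB ?cB //.
rewrite ltnS leqn0 => /eqP -> /idx_surj-/(_ k_gt0)[l dl <-]; exact: eAB.
Qed.

Lemma row_dzeroP N A : is_row N A ->
  dzero A <-> forall l, digits N l -> row_coef A l = 0.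
Proof.
move=> [rA cA]; rewrite dzeroP rA cA; split=> [A0 l dl|A0 i j].
  exact/A0/idx_lt.
by rewrite ltnS leqn0 => /eqP -> /idx_surj-/(_ k_gt0)[l dl <-]; exact: A0.
Qed.

Lemma row_dmul M N f A B : is_row M A -> digit_map_mx M N f B ->
  is_row N (dmul A B) /\ forall l, digits N l -> row_coef (dmul A B) l = row_coef A (f l).
Proof.
move=> [rA cA] [rB cB df eB]; split=> [|l dl]; first by split; rewrite ?dmul_rows ?dmul_cols ?cA.
rewrite /row_coef dmulE ?cA //.
under eq_bigr => r _ do rewrite (eB _ _ (ltn_ord r) dl).
by rewrite sum_pick ?idx_lt //; apply: df.
Qed.

Lemma row_stp N M P f A B : (M <= N)%N -> is_row N A -> digit_map_mx M P f B ->
  is_row (P + (N - M))%N (stp A B) /\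
  forall l, digits (P + (N - M))%N l -> row_coef (stp A B) l = row_coef A (on_prefix P f l).
Proof.
move=> MN rowA mB; have [_ cA] := rowA; have [rB _ _ _] := mB.
rewrite stp_dvd ?cA ?rB ?dvdn_exp2l ?expn_gt0 ?k_gt0 // -expnB //.
by apply: row_dmul rowA _; rewrite -{1}(subnKC MN); apply: digit_map_dkron.
Qed.

Lemma row_dopp N A : is_row N A ->
  is_row N (dopp A) /\ forall l, row_coef (dopp A) l = - row_coef A l.
Proof. by case: A => r c A [rA cA]; split=> // l; rewrite /row_coef doppE. Qed.

Lemma row_stp_dadd N f g A B C : is_row N A ->
  digit_map_mx N N f B -> digit_map_mx N N g C ->
  is_row N (stp A (dadd B C)) /\ forall l, digits N l ->
    row_coef (stp A (dadd B C)) l = row_coef A (f l) + row_coef A (g l).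
Proof.
move=> rowA mB mC; have [rA cA] := rowA; have [rB cB _ _] := mB; have [rC cC _ _] := mC.
have -> : stp A (dadd B C) = dmul A (dadd B C).
  by rewrite stp_dvd; rewrite ?dadd_rows ?cA ?rB ?divnn ?expn_gt0 ?k_gt0 ?dkron_did1.
have [rowAB coefAB] := row_dmul rowA mB; have [_ coefAC] := row_dmul rowA mC.
split=> [|l dl]; first by split; rewrite ?dmul_rows ?dmul_cols ?dadd_rows ?dadd_cols ?cA ?rB.
by rewrite -!coefAB -?coefAC // /row_coef dmul_daddr ?cA ?rB ?rC ?cB ?cC.
Qed.

End DigitMaps.

Lemma on_prefix_rot_rot1 (x z : nat) M T :
  on_prefix (size M).+1 (rot (size M))
    (on_prefix (size M).+2 (rot 1) (x :: M ++ z :: T)) = z :: M ++ x :: T.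
Proof.
have sM : size (rcons M z) = (size M).+1 by rewrite size_rcons.
have sxM : size (x :: rcons M z) = (size M).+2 by rewrite /= sM.
have -> : on_prefix (size M).+2 (rot 1) (x :: M ++ z :: T) = rcons M z ++ x :: T.
  rewrite -cat_rcons -cat_cons /on_prefix (take_size_cat _ sxM).
  by rewrite (drop_size_cat _ sxM) rot1_cons cat_rcons.
rewrite /on_prefix (take_size_cat _ sM) (drop_size_cat _ sM).
by rewrite -cats1 rot_size_cat.
Qed.

Lemma on_prefix_rot_on_prefix_rot1 (x z : nat) M T :
  on_prefix (size M).+2 (rot (size M).+1 \o on_prefix (size M).+1 (rot 1))
    (x :: M ++ z :: T) = z :: M ++ x :: T.
Proof.
have sM : size (rcons M z) = (size M).+1 by rewrite size_rcons.
have sxM : size (x :: rcons M z) = (size M).+2 by rewrite /= sM.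
rewrite -cat_rcons -cat_cons /on_prefix (take_size_cat _ sxM) (drop_size_cat _ sxM) /=.
rewrite -cats1 (take_size_cat _ (erefl (size M))) (drop_size_cat _ (erefl (size M))).
by rewrite rot1_cons -(size_rcons M x) rot_size_cat /= cat_rcons.
Qed.

Lemma iota_split2 (a b N : nat) : (a < b)%N -> (b < N)%N ->
  iota 0 N = iota 0 a ++ a :: iota a.+1 (b - a.+1) ++ b :: iota b.+1 (N - b.+1).
Proof.
move=> ab bN; have -> : N = (a + ((b - a.+1).+1 + (N - b.+1).+1))%N by lia.
rewrite iotaD add0n iotaD /=.
have -> : (a + (b - a.+1).+1)%N = b by lia.
by congr (_ ++ _ :: _ ++ _ :: iota _ _); lia.
Qed.

Section Profiles.
Variables n k : nat.
Implicit Types y : profile n k.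

Definition pdigit y (j : nat) : nat := if insub j is Some j' then val (y j') else 0%N.

Definition pdigits y : seq nat := map (pdigit y) (iota 0 n).

Lemma pdigitE y (j : 'I_n) : pdigit y j = y j.
Proof. by rewrite /pdigit valK. Qed.

Lemma pdigits_digits y : digits k n (pdigits y).
Proof.
rewrite /digits size_map size_iota eqxx; apply/allP => x /mapP[j].
rewrite mem_iota add0n => /andP[_ jn] ->; rewrite /pdigit insubT; exact: ltn_ord.
Qed.

Lemma pdigits_enum y : [seq val (y j) | j <- enum 'I_n] = pdigits y.
Proof. by rewrite /pdigits -val_enum_ord -map_comp; apply: eq_map => j /=; rewrite pdigitE. Qed.

Lemma pdigits_tperm y (a b : 'I_n) : (a < b)%N ->
  let P := [seq pdigit y j | j <- iota 0 a] in
  exists M T, [/\ size M = (b - a.+1)%N,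
    pdigits y = P ++ val (y a) :: M ++ val (y b) :: T &
    pdigits (fun j => y (tperm a b j)) = P ++ val (y b) :: M ++ val (y a) :: T].
Proof.
move=> ab P; have bn := ltn_ord b.
have iotaE := iota_split2 ab bn.
have fixed j : j != a :> nat -> j != b :> nat ->
    pdigit (fun j => y (tperm a b j)) j = pdigit y j.
  rewrite /pdigit; case: insubP => // j' _ <- ja jb.
  by rewrite tpermD // eq_sym -(inj_eq val_inj) ?ja ?jb.
exists [seq pdigit y j | j <- iota a.+1 (b - a.+1)], [seq pdigit y j | j <- iota b.+1 (n - b.+1)].
split; first by rewrite size_map size_iota.
  by rewrite /pdigits iotaE map_cat /= map_cat /= !pdigitE.
rewrite /pdigits iotaE map_cat /= map_cat /= !pdigitE tpermL tpermR.
congr (_ ++ _ :: _ ++ _ :: _); apply/eq_in_map => j; rewrite mem_iota => /andP[j1 j2];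
  by rewrite fixed //; apply/negP => /eqP ej; subst j; lia.
Qed.

Hypothesis k_gt0 : (0 < k)%N.

Lemma pdigits_surj l : digits k n l -> exists y, pdigits y = l.
Proof.
case/andP => /eqP sl /allP dl.
exists (fun j : 'I_n => Ordinal (ltn_pmod (nth 0%N l j) k_gt0)).
apply: (@eq_from_nth _ 0%N) => [|j]; rewrite size_map size_iota ?sl // => jn.
rewrite (nth_map 0%N) ?size_iota // nth_iota // add0n /pdigit insubT /= modn_small //.
by apply/dl/mem_nth; rewrite sl.
Qed.

End Profiles.

Section StructureVectors.
Variable R : comNzRingType.
Variables n k : nat.
Hypothesis k_gt0 : (0 < k)%N.

Lemma foldl_stp_ddelta (ss : seq 'I_k) (A : dmat R) : is_row k (size ss) A ->
  foldl (@stp R) A [seq ddelta R s | s <- ss] = dscal (row_coef k A (map val ss)).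
Proof.
elim: ss A => [|s ss IHss] A rowA.
  have [rA cA] := rowA; apply: dmatP => [||i j]; rewrite ?rA ?cA //.
  by rewrite !ltnS !leqn0 => /eqP -> /eqP ->; rewrite dscalE.
have [rowAs coefAs] := row_stp k_gt0 (ltn0Sn _) rowA (digit_map_ddelta R s).
have dss : digits k (size ss) (map val ss).
  by rewrite /digits size_map eqxx; apply/allP => _ /mapP[s' _ ->]; apply: ltn_ord.
rewrite add0n subn1 in rowAs coefAs.
by rewrite /= IHss // coefAs // /on_prefix drop0.
Qed.

Lemma structure_vector_coef (ci : profile n k -> R) V :
  is_structure_vector ci V -> forall y, ci y = row_coef k (DM V) (pdigits y).
Proof.
move=> hV y; have := hV y; rewrite (map_comp (@ddelta R k) y) foldl_stp_ddelta.
  by move/(congr1 (fun D => dent D 0 0)); rewrite !dscalE -map_comp pdigits_enum => <-.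
by rewrite size_map size_enum_ord.
Qed.

End StructureVectors.

Section Skew.
Variable R : comNzRingType.
Variables n k : nat.
Implicit Types d : 'I_n -> profile n k -> R.

Definition skew_under d (s : 'S_n) :=
  forall i x, d i x = (-1) ^+ odd_perm s * d (s i) (fun j => x (s^-1 j))%g.

Lemma skew_under1 d : skew_under d 1.
Proof.
move=> i x; rewrite odd_perm1 expr0 mul1r perm1.
by congr (d _ _); apply: functional_extensionality => j; rewrite invg1 perm1.
Qed.

Lemma skew_underM d s r : skew_under d s -> skew_under d r -> skew_under d (s * r).
Proof.
move=> hs hr i x; rewrite hs hr odd_permM signr_addb mulrA permM.
by congr (_ * d _ _); apply: functional_extensionality => j; rewrite invMg permM.
Qed.

Lemma skew_under_tperms d :
  (forall a b, skew_under d (tperm a b)) -> forall s, skew_under d s.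
Proof.
move=> ht s; have [ts -> _] := prod_tpermP s.
elim: ts => [|t ts IHts]; first by rewrite big_nil; apply: skew_under1.
by rewrite big_cons; apply: skew_underM.
Qed.

Lemma tperm_conj (a b c : 'I_n) : a != c -> b != c ->
  tperm b c = (tperm a b * tperm a c * tperm a b)%g.
Proof. by move=> ac bc; rewrite -(tpermJ_tperm ac bc) conjgE tpermV mulgA. Qed.

Lemma skew_under_tperm_conj d (a b c : 'I_n) : a != c -> b != c ->
  skew_under d (tperm a b) -> skew_under d (tperm a c) -> skew_under d (tperm b c).
Proof. by move=> ac bc hab hac; rewrite (tperm_conj ac bc); do 2?apply: skew_underM. Qed.

Variable c : 'I_n -> profile n k -> R.
Variables i0 i1 : 'I_n.

Definition antisym_swap_pivot :=
  forall i, i != i0 -> forall y, c i y = - c i0 (fun j => y (tperm i0 i j)).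

Definition antisym_swap_off_pivot :=
  forall m, m != i0 -> m != i1 -> forall y, c i0 y = - c i0 (fun j => y (tperm i1 m j)).

Lemma skew_under_off_pivot : antisym_swap_off_pivot ->
  forall a b, a != i0 -> b != i0 -> skew_under (fun=> c i0) (tperm a b).
Proof.
move=> hB; have hB1 m : m != i0 -> m != i1 -> skew_under (fun=> c i0) (tperm i1 m).
  by move=> mi0 mi1 i x; rewrite odd_tperm (eq_sym i1) mi1 expr1 mulN1r tpermV; apply: hB.
move=> a b ai0 bi0; have [->|ab] := eqVneq a b; first by rewrite tperm1; apply: skew_under1.
have [ea|ai1] := eqVneq a i1.
  by rewrite ea in ab *; apply: hB1 => //; rewrite eq_sym.
have [eb|bi1] := eqVneq b i1; first by rewrite eb tpermC; apply: hB1.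
by apply: (skew_under_tperm_conj (a := i1)); rewrite 1?(eq_sym i1) //; apply: hB1.
Qed.

(* For [i] off [i0, m], conjugating by [tperm i0 i] turns [tperm i0 m] into [tperm i m],
   which acts on [c i0] by the off-pivot law. *)
Lemma skew_under_pivot : antisym_swap_pivot -> antisym_swap_off_pivot ->
  forall m, m != i0 -> skew_under c (tperm i0 m).
Proof.
move=> hA /skew_under_off_pivot hB m mi0 i x.
rewrite odd_tperm (eq_sym i0) mi0 expr1 mulN1r tpermV.
have [->|ii0] := eqVneq i i0.
  rewrite tpermL (hA m mi0) opprK; congr (c i0 _).
  by apply: functional_extensionality => j; rewrite tpermK.
have [->|im] := eqVneq i m; first by rewrite tpermR; apply: hA.
rewrite tpermD ?(eq_sym i0) ?(eq_sym m) // (hA i ii0) (hA i ii0 (fun j => x _)) opprK.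
have := hB i m ii0 mi0 i0 (fun j => x (tperm i0 i j)).
rewrite /= odd_tperm im expr1 mulN1r tpermV => ->; rewrite opprK.
congr (c i0 _); apply: functional_extensionality => j.
by rewrite (tperm_conj (a := i0) (b := i) (c := m)) ?(eq_sym i0) // !permM tpermK.
Qed.

Lemma skew_symmetricP : i0 != i1 ->
  skew_symmetric c <-> antisym_swap_pivot /\ antisym_swap_off_pivot.
Proof.
move=> i01; split=> [skew | [hA hB]].
  split=> [i ni0 | m mi0 mi1] y.
    by rewrite (skew (tperm i0 i) i) tpermR odd_tperm eq_sym ni0 expr1 mulN1r tpermV.
  rewrite (skew (tperm i1 m) i0) odd_tperm eq_sym mi1 expr1 mulN1r tpermV.
  by rewrite tpermD // eq_sym.
have hA0 := skew_under_pivot hA hB.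
suff all_s : forall s, skew_under c s by [].
apply: skew_under_tperms => a b.
have [->|ab] := eqVneq a b; first by rewrite tperm1; apply: skew_under1.
have [ea|ai0] := eqVneq a i0; first by rewrite ea eq_sym in ab *; apply: hA0.
have [->|bi0] := eqVneq b i0; first by rewrite tpermC; apply: hA0.
by apply: (skew_under_tperm_conj (a := i0)); rewrite 1?(eq_sym i0) //; apply: hA0.
Qed.

End Skew.

Section Conditions.
Variable R : comNzRingType.
Variables n k : nat.
Hypothesis k_gt0 : (0 < k)%N.
Variable c : 'I_n -> profile n k -> R.
Variable V : 'I_n -> 'rV[R]_(k ^ n).
Hypothesis hV : forall i, is_structure_vector (c i) (V i).
Variable i0 : 'I_n.
Hypothesis i0_eq0 : nat_of_ord i0 = 0%N.
Variable i1 : 'I_n.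
Hypothesis i1_eq1 : nat_of_ord i1 = 1%N.

Let cE i y := structure_vector_coef k_gt0 (hV i) y.

Let row_V i : is_row k n (DM (V i)). Proof. by []. Qed.

Lemma swap_first_iff (i : 'I_n) : (0 < i)%N ->
  DM (V i) = dopp (stp (stp (DM (V i0)) (dswap R (k ^ (i - 1)) k)) (dswap R k (k ^ i)))
  <-> forall y, c i y = - c i0 (fun j => y (tperm i0 i j)).
Proof.
move=> i_gt0; have i_lt := ltn_ord i.
have W1 : digit_map_mx k i i (rot (i - 1)) (dswap R (k ^ (i - 1)) k).
  by have := digit_map_dswap R k_gt0 (i - 1) 1; rewrite subnK // expn1.
have W2 : digit_map_mx k i.+1 i.+1 (rot 1) (dswap R k (k ^ i)).
  by have := digit_map_dswap R k_gt0 1 i; rewrite add1n expn1.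
have [row1 coef1] := row_stp k_gt0 (ltnW i_lt) (row_V i0) W1.
rewrite subnKC ?(ltnW i_lt) // in row1 coef1.
have [row2 coef2] := row_stp k_gt0 i_lt row1 W2; rewrite subnKC // in row2 coef2.
have [rowA coefA] := row_dopp row2.
have coefE y : row_coef k (stp (stp (DM (V i0)) (dswap R (k ^ (i - 1)) k)) (dswap R k (k ^ i)))
    (pdigits y) = c i0 (fun j => y (tperm i0 i j)).
  have i0i : (i0 < i)%N by rewrite i0_eq0.
  have [M [T [sM yE tE]]] := pdigits_tperm y i0i.
  rewrite i0_eq0 subn1 /= in sM yE tE.
  have dy := pdigits_digits y.
  have dy1 : digits k n (on_prefix i.+1 (rot 1) (pdigits y)).
    by have := digits_on_prefix (t := (n - i.+1)%N) W2; rewrite subnKC //; apply.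
  rewrite coef2 // coef1 //.
  have iE : nat_of_ord i = (size M).+1 by rewrite sM prednK.
  by rewrite cE tE yE subn1 iE /= on_prefix_rot_rot1.
split=> eA; first by move=> y; rewrite cE eA coefA coefE.
apply: (row_coef_ext k_gt0 (row_V i) rowA) => l /(pdigits_surj k_gt0)[y <-].
by rewrite -cE eA coefA coefE.
Qed.

Lemma swap_second_iff (m : 'I_n) : (1 < m)%N ->
  (forall s : 'I_k, dzero (stp (stp (DM (V i0)) (ddelta R s))
      (dadd (did R (k ^ (n - 1)))
            (dkron (stp (dswap R (k ^ (m - 1)) k) (dswap R k (k ^ (m - 2))))
                   (did R (k ^ (n - m.+1)))))))
  <-> forall y, c i0 y = - c i0 (fun j => y (tperm i1 m j)).
Proof.
move=> m_gt1; have m_lt := ltn_ord m; have n_gt0 := leq_ltn_trans (leq0n m) m_lt.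
set swap1m := on_prefix m (rot (m - 1) \o on_prefix (m - 1) (rot 1)).
have W1 : digit_map_mx k m m (rot (m - 1)) (dswap R (k ^ (m - 1)) k).
  by have := digit_map_dswap R k_gt0 (m - 1) 1; rewrite subnK 1?ltnW // expn1.
have W2 : digit_map_mx k (m - 1) (m - 1) (rot 1) (dswap R k (k ^ (m - 2))).
  by have := digit_map_dswap R k_gt0 1 (m - 2); rewrite expn1 (_ : 1 + (m - 2) = m - 1)%N //; lia.
have W := digit_map_dkron k_gt0 (n - m.+1)%N (digit_map_stp k_gt0 (leq_subr 1 m) W1 W2).
rewrite (_ : m + (n - m.+1) = n - 1)%N in W; last by lia.
have coefB (s : 'I_k) : let C := stp (stp (DM (V i0)) (ddelta R s))
      (dadd (did R (k ^ (n - 1)))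
            (dkron (stp (dswap R (k ^ (m - 1)) k) (dswap R k (k ^ (m - 2))))
                   (did R (k ^ (n - m.+1))))) in
    is_row k (n - 1)%N C /\ forall l, digits k (n - 1)%N l ->
    row_coef k C l =
      row_coef k (DM (V i0)) (val s :: l) + row_coef k (DM (V i0)) (val s :: swap1m l).
  have [rowU coefU] := row_stp k_gt0 n_gt0 (row_V i0) (digit_map_ddelta R s).
  rewrite add0n in rowU coefU.
  have {}coefU l : digits k (n - 1)%N l -> row_coef k (stp (DM (V i0)) (ddelta R s)) l =
      row_coef k (DM (V i0)) (val s :: l) by move=> dl; rewrite coefU // /on_prefix drop0.
  have [rowC coefC] := row_stp_dadd k_gt0 rowU (digit_map_did R k (n - 1)) W.
  have [_ _ dW _] := W.
  by split=> // l dl; rewrite coefC // !coefU ?dW.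
have key (y : profile n k) : exists2 l, digits k (n - 1)%N l & pdigits y = val (y i0) :: l /\
    pdigits (fun j => y (tperm i1 m j)) = val (y i0) :: swap1m l.
  have i1m : (i1 < m)%N by rewrite i1_eq1.
  have [M [T [sM yE tE]]] := pdigits_tperm y i1m.
  have y0 : pdigit y 0 = y i0 by rewrite -pdigitE i0_eq0.
  rewrite i1_eq1 /= y0 in sM yE tE.
  exists (val (y i1) :: M ++ val (y m) :: T); last first.
    have mE : nat_of_ord m = (size M).+2 by rewrite sM; lia.
    by rewrite yE tE /swap1m mE subn1 /= on_prefix_rot_on_prefix_rot1.
  have dy : digits k (1 + (n - 1)) (pdigits y).
    by rewrite (subnKC n_gt0); apply: pdigits_digits.
  by have [_] := digits_take_drop (leq_addr _ 1) dy; rewrite addKn yE.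
split=> [hB y | hB s].
  have [l dl [yE tE]] := key y; have [rowC coefC] := coefB (y i0).
  have := (row_dzeroP k_gt0 rowC).1 (hB (y i0)) l dl.
  by rewrite coefC // !cE yE tE => /eqP; rewrite addr_eq0 => /eqP.
have [rowC coefC] := coefB s; apply/(row_dzeroP k_gt0 rowC) => l dl.
have dsl : digits k n (val s :: l).
  by rewrite -(subnKC n_gt0) -cat1s; apply: digits_cat; rewrite // /digits /= ltn_ord.
have [y yE] := pdigits_surj k_gt0 dsl; have [l' _ [yE' tE]] := key y.
rewrite coefC //; have := yE'; rewrite yE => -[/val_inj -> ->].
by rewrite -yE' -tE -!cE hB addNr.
Qed.

Lemma condition_A_iff :
  (forall i : 'I_n, (2 <= i.+1)%N ->
      DM (V i) = dopp (stp (stp (DM (V i0)) (dswap R (k ^ (i.+1 - 2)) k))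
                           (dswap R k (k ^ (i.+1 - 1)))))
  <-> antisym_swap_pivot c i0.
Proof.
have ne0 i : (i != i0) = (0 < i)%N by rewrite -(inj_eq val_inj) /= i0_eq0 lt0n.
split=> hA i; rewrite ?ne0 => hi; last rewrite !subSS subn0.
  by apply/(swap_first_iff hi); move: (hA i hi); rewrite !subSS subn0.
by apply: (iffRL (swap_first_iff hi)); apply: hA; rewrite ne0.
Qed.

Lemma condition_B_iff :
  (forall (s : 'I_k) (i : nat), (3 <= i <= n)%N ->
      dzero (stp (stp (DM (V i0)) (ddelta R s))
                 (dadd (did R (k ^ (n - 1)))
                       (dkron (stp (dswap R (k ^ (i - 2)) k) (dswap R k (k ^ (i - 3))))
                              (did R (k ^ (n - i)))))))
  <-> antisym_swap_off_pivot c i0 i1.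
Proof.
split=> hB.
  move=> m; rewrite -!(inj_eq val_inj) /= i0_eq0 i1_eq1 => m0 m1.
  have m_gt1 : (1 < m)%N by case: (nat_of_ord m) m0 m1 => [|[|]].
  apply/(swap_second_iff m_gt1) => s.
  by apply: hB; rewrite ltnS m_gt1 ltn_ord.
move=> s [|m] // /andP[m_gt1 m_lt].
apply: (iffRL (swap_second_iff (m := Ordinal m_lt) m_gt1)) => y.
by apply: hB; rewrite -(inj_eq val_inj) /= ?i0_eq0 ?i1_eq1; case: m m_gt1 {m_lt} => [|[|]].
Qed.

End Conditions.


Theorem theorem3p10 (R : realFieldType) (n kappa : nat)
  (hn : (2 <= n)%N) (hk : (1 <= kappa)%N)
  (c : 'I_n -> profile n kappa -> R) (V : 'I_n -> 'rV[R]_(kappa ^ n))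
  (hV : forall i, is_structure_vector (c i) (V i)) :
  let V1 := DM (V (Ordinal (leq_trans (isT : (0 < 2)%N) hn))) in
  (* (A): for i = 2..n (paper indexing), i.e. index i' = i-1 in 'I_n *)
  let condA :=
    forall i : 'I_n, (2 <= i.+1)%N ->
      DM (V i) = dopp (stp (stp V1 (dswap R (kappa ^ (i.+1 - 2)) kappa))
                           (dswap R kappa (kappa ^ (i.+1 - 1)))) in
  (* (B): for s = 1..kappa and i = 3..n *)
  let condB :=
    forall (s : 'I_kappa) (i : nat), (3 <= i <= n)%N ->
      dzero (stp (stp V1 (ddelta R s))
                 (dadd (did R (kappa ^ (n - 1)))
                       (dkron (stp (dswap R (kappa ^ (i - 2)) kappa)
                                   (dswap R kappa (kappa ^ (i - 3))))
                              (did R (kappa ^ (n - i)))))) in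
  ((n = 2)%N -> (skew_symmetric c <-> condA)) /\
  ((2 < n)%N -> (skew_symmetric c <-> condA /\ condB)).
Proof.
move=> V1 condA condB; rewrite {}/condA {}/condB {}/V1.
set i0 := Ordinal _; pose i1 : 'I_n := Ordinal hn.
have A_iff := condition_A_iff hk hV (i0 := i0) erefl.
have B_iff := condition_B_iff hk hV (i0 := i0) (i1 := i1) erefl erefl.
have skewP := skew_symmetricP c (isT : i0 != i1).
have B_vacuous : n = 2 -> antisym_swap_off_pivot c i0 i1.
  move=> n2 m; rewrite -!(inj_eq val_inj) /= => m0 m1; exfalso.
  by move: (ltn_ord m) m0 m1; rewrite [X in (_ < X)%N -> _]n2; case: (nat_of_ord m) => [|[|]].
tauto.
Qed.
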